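(* Let $(l_i)$ be a family of pairwise distinct labels indexed by a set containing the finite index sets $I,J$, and let $\sigma_i,\tau_j\in\mathbb{T}$. Then: (1) $\langle l_i:\sigma_i\mid i\in I\rangle\le\langle l_j:\tau_j\mid j\in J\rangle$ iff $J\subseteq I$ and $\sigma_j\le\tau_j$ for all $j\in J$; (2) $\langle l_i:\sigma_i\mid i\in I\rangle\cap\langle l_j:\tau_j\mid j\in J\rangle=\langle l_i:\sigma_i,\ l_j:\tau_j,\ l_k:\sigma_k\cap\tau_k\mid i\in I\setminus J,\ j\in J\setminus I,\ k\in I\cap J\rangle$; (3) $\langle l_i:\sigma_i\mid i\in I\rangle+\langle l_j:\tau_j\mid j\in J\rangle=\langle l_i:\sigma_i,\ l_j:\tau_j\mid i\in I\setminus J,\ j\in J\rangle$; (4) for every $\rho\in\mathbb{T}_R$ there exist finite $I$, distinct labels $l_i$ and types $\sigma_i$ with $\rho=\langle l_i:\sigma_i\mid i\in I\rangle$.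
   Context: $\mathbb{T}\ni\sigma ::= a\mid\omega\mid\sigma_1\to\sigma_2\mid\sigma_1\cap\sigma_2\mid\rho$ and record types $\mathbb{T}_R\ni\rho ::= \langle\rangle\mid\langle l:\sigma\rangle\mid\rho_1+\rho_2\mid\rho_1\cap\rho_2$ ($a$ type constants, $l$ labels). Subtyping $\le$ is the least preorder with: $\sigma\le\omega$; $\omega\le\omega\to\omega$; $\sigma\cap\tau\le\sigma$; $\sigma\cap\tau\le\tau$; $\sigma\le\tau_1,\sigma\le\tau_2\Rightarrow\sigma\le\tau_1\cap\tau_2$; $(\sigma\to\tau_1)\cap(\sigma\to\tau_2)\le\sigma\to\tau_1\cap\tau_2$; $\sigma_2\le\sigma_1,\tau_1\le\tau_2\Rightarrow\sigma_1\to\tau_1\le\sigma_2\to\tau_2$; $\langle l:\sigma\rangle\le\langle\rangle$; $\langle l:\sigma\rangle\cap\langle l:\tau\rangle\le\langle l:\sigma\cap\tau\rangle$; $\sigma\le\tau\Rightarrow\langle l:\sigma\rangle\le\langle l:\tau\rangle$; $\rho+\langle\rangle=\langle\rangle+\rho=\rho$; $(\rho_1+\rho_2)+\rho_3=\rho_1+(\rho_2+\rho_3)$; $(\rho_1\cap\rho_2)+\rho_3=(\rho_1+\rho_3)\cap(\rho_2+\rho_3)$; $\langle l:\sigma\rangle+(\langle l:\tau\rangle\cap\rho)=\langle l:\tau\rangle\cap\rho$; $\langle l:\sigma\rangle+(\langle l':\tau\rangle\cap\rho)=\langle l':\tau\rangle\cap(\langle l:\sigma\rangle+\rho)$ if $l\neq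 l'$; $\rho_1\le\rho_2\Rightarrow\rho_1+\rho\le\rho_2+\rho$; $\rho_1=\rho_2\Rightarrow\rho+\rho_1=\rho+\rho_2$. $\sigma=\tau$ means $\sigma\le\tau$ and $\tau\le\sigma$. Notation: for pairwise distinct labels, $\langle l_i:\sigma_i\mid i\in I\rangle$ stands for $\bigcap_{i\in I}\langle l_i:\sigma_i\rangle$ if $I\neq\emptyset$ and for $\langle\rangle$ if $I=\emptyset$ (intersections taken up to associativity and commutativity). *)

From mathcomp Require Import all_boot.
Set Implicit Arguments. Unset Strict Implicit. Unset Printing Implicit Defensive.

Definition label := nat.

(* Raw syntax: a single syntax for T and T_R (record intersection and
   ordinary intersection are the same constructor, as in the paper's grammar
   where rho1 /\ rho2 is both in T_R and in T). *)
Inductive ty : Type :=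
| TConst (a : nat)
| TOmega
| TArr (s t : ty)
| TInt (s t : ty)
| TEmpty
| TField (l : label) (s : ty)
| TPlus (r1 r2 : ty).

(* wf_ty s  <->  s in T ;  wf_rec r  <->  r in T_R *)
Inductive wf_ty : ty -> Prop :=
| WfConst a : wf_ty (TConst a)
| WfOmega : wf_ty TOmega
| WfArr s t : wf_ty s -> wf_ty t -> wf_ty (TArr s t)
| WfInt s t : wf_ty s -> wf_ty t -> wf_ty (TInt s t)
| WfRec r : wf_rec r -> wf_ty r
with wf_rec : ty -> Prop :=
| WrEmpty : wf_rec TEmpty
| WrField l s : wf_ty s -> wf_rec (TField l s)
| WrPlus r1 r2 : wf_rec r1 -> wf_rec r2 -> wf_rec (TPlus r1 r2)
| WrInt r1 r2 : wf_rec r1 -> wf_rec r2 -> wf_rec (TInt r1 r2).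

(* Subtyping: the least preorder (on T) closed under the listed rules.
   Equations  A = B  of the definition are given as two inclusions.
   Transitivity goes through elements of T only. *)
Inductive sub : ty -> ty -> Prop :=
| SRefl s : sub s s
| STrans s t u : wf_ty t -> sub s t -> sub t u -> sub s u
| SOmega s : sub s TOmega
| SOmegaArr : sub TOmega (TArr TOmega TOmega)
| SIntL s t : sub (TInt s t) s
| SIntR s t : sub (TInt s t) t
| SGlb s t1 t2 : sub s t1 -> sub s t2 -> sub s (TInt t1 t2)
| SArrDist s t1 t2 :
    sub (TInt (TArr s t1) (TArr s t2)) (TArr s (TInt t1 t2))
| SArr s1 s2 t1 t2 : sub s2 s1 -> sub t1 t2 -> sub (TArr s1 t1) (TArr s2 t2)
| SFieldEmpty l s : sub (TField l s) TEmpty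
| SFieldInt l s t : sub (TInt (TField l s) (TField l t)) (TField l (TInt s t))
| SField l s t : sub s t -> sub (TField l s) (TField l t)
| SPlusEmptyR1 r : wf_rec r -> sub (TPlus r TEmpty) r
| SPlusEmptyR2 r : wf_rec r -> sub r (TPlus r TEmpty)
| SPlusEmptyL1 r : wf_rec r -> sub (TPlus TEmpty r) r
| SPlusEmptyL2 r : wf_rec r -> sub r (TPlus TEmpty r)
| SPlusAssoc1 r1 r2 r3 : wf_rec r1 -> wf_rec r2 -> wf_rec r3 ->
    sub (TPlus (TPlus r1 r2) r3) (TPlus r1 (TPlus r2 r3))
| SPlusAssoc2 r1 r2 r3 : wf_rec r1 -> wf_rec r2 -> wf_rec r3 ->
    sub (TPlus r1 (TPlus r2 r3)) (TPlus (TPlus r1 r2) r3)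
| SPlusDist1 r1 r2 r3 : wf_rec r1 -> wf_rec r2 -> wf_rec r3 ->
    sub (TPlus (TInt r1 r2) r3) (TInt (TPlus r1 r3) (TPlus r2 r3))
| SPlusDist2 r1 r2 r3 : wf_rec r1 -> wf_rec r2 -> wf_rec r3 ->
    sub (TInt (TPlus r1 r3) (TPlus r2 r3)) (TPlus (TInt r1 r2) r3)
| SPlusSame1 l s t r : wf_ty s -> wf_ty t -> wf_rec r ->
    sub (TPlus (TField l s) (TInt (TField l t) r)) (TInt (TField l t) r)
| SPlusSame2 l s t r : wf_ty s -> wf_ty t -> wf_rec r ->
    sub (TInt (TField l t) r) (TPlus (TField l s) (TInt (TField l t) r))
| SPlusDiff1 l l' s t r : l <> l' -> wf_ty s -> wf_ty t -> wf_rec r ->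
    sub (TPlus (TField l s) (TInt (TField l' t) r))
        (TInt (TField l' t) (TPlus (TField l s) r))
| SPlusDiff2 l l' s t r : l <> l' -> wf_ty s -> wf_ty t -> wf_rec r ->
    sub (TInt (TField l' t) (TPlus (TField l s) r))
        (TPlus (TField l s) (TInt (TField l' t) r))
| SPlusMonL r1 r2 r : wf_rec r1 -> wf_rec r2 -> wf_rec r ->
    sub r1 r2 -> sub (TPlus r1 r) (TPlus r2 r)
| SPlusEqR1 r r1 r2 : wf_rec r1 -> wf_rec r2 -> wf_rec r ->
    sub r1 r2 -> sub r2 r1 -> sub (TPlus r r1) (TPlus r r2)
| SPlusEqR2 r r1 r2 : wf_rec r1 -> wf_rec r2 -> wf_rec r ->
    sub r1 r2 -> sub r2 r1 -> sub (TPlus r r2) (TPlus r r1).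

Definition tyeq (s t : ty) : Prop := sub s t /\ sub t s.

(* <l_1 : s_1, ..., l_n : s_n> as the (right-nested) intersection of the
   single fields, or <> for the empty list. *)
Fixpoint rec_of (fs : seq (label * ty)) : ty :=
  match fs with
  | [::] => TEmpty
  | [:: f] => TField f.1 f.2
  | f :: fs' => TInt (TField f.1 f.2) (rec_of fs')
  end.

From HB Require Import structures.
From mathcomp Require Import all_boot.
Set Implicit Arguments. Unset Strict Implicit. Unset Printing Implicit Defensive.

(* A record <l_i : s_i | i in I> is the meet of its fields, so comparing,
   intersecting or rewriting records reduces to comparing sets of fields,
   the field rules, and the +-rules moving one field at a time through a
   record.  The converse of (1) needs an invariant of subtyping: the type
   [lookup m s] that s provides for the label m (repeated fields are
   intersected, the right operand of + wins) can only decrease along [sub].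
   Normal forms (4) are built by induction on rho, using (3) for + and (2),
   indexed by labels, for intersections. *)

Definition ty_eq_dec (s t : ty) : {s = t} + {s <> t}.
Proof. decide equality; exact: eq_comparable. Qed.

HB.instance Definition _ := comparableMixin ty_eq_dec.

Create HintDb wf.
#[local] Hint Constructors wf_ty wf_rec : wf.

Lemma wf_ty_int s t : wf_ty (TInt s t) -> wf_ty s /\ wf_ty t.
Proof. by move=> W; inversion W as [| | | ? ? | ? Wr]; last inversion Wr; auto with wf. Qed.

Lemma wf_ty_field l s : wf_ty (TField l s) -> wf_ty s.
Proof. by move=> W; inversion W as [| | | | ? Wr]; inversion Wr. Qed.

Lemma wf_ty_plus r1 r2 : wf_ty (TPlus r1 r2) -> wf_ty r1 /\ wf_ty r2.
Proof. by move=> W; inversion W as [| | | | ? Wr]; inversion Wr; auto with wf. Qed.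

Lemma tyeq_refl s : tyeq s s.
Proof. by split; apply: SRefl. Qed.

Lemma tyeq_sym s t : tyeq s t -> tyeq t s.
Proof. by case. Qed.

Lemma tyeq_trans t s u : wf_ty t -> tyeq s t -> tyeq t u -> tyeq s u.
Proof. by move=> Wt [st ts] [tu ut]; split; apply: STrans Wt _ _. Qed.

Ltac tyeq_via mid := apply: (tyeq_trans (t := mid)); first by auto with wf.

Lemma sub_int s t s' t' :
  wf_ty s -> wf_ty t -> sub s s' -> sub t t' -> sub (TInt s t) (TInt s' t').
Proof.
move=> Ws Wt ss' tt'; apply: SGlb.
  by apply: (STrans Ws); [exact: SIntL | exact: ss'].
by apply: (STrans Wt); [exact: SIntR | exact: tt'].
Qed.

Lemma tyeq_int s t s' t' : wf_ty s -> wf_ty t -> wf_ty s' -> wf_ty t' ->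
  tyeq s s' -> tyeq t t' -> tyeq (TInt s t) (TInt s' t').
Proof. by move=> Ws Wt Ws' Wt' [? ?] [? ?]; split; apply: sub_int. Qed.

Lemma tyeq_plusl r1 r2 r : wf_rec r1 -> wf_rec r2 -> wf_rec r ->
  tyeq r1 r2 -> tyeq (TPlus r1 r) (TPlus r2 r).
Proof. by move=> W1 W2 W [? ?]; split; apply: SPlusMonL. Qed.

Lemma tyeq_plusr r r1 r2 : wf_rec r1 -> wf_rec r2 -> wf_rec r ->
  tyeq r1 r2 -> tyeq (TPlus r r1) (TPlus r r2).
Proof. by move=> W1 W2 W [? ?]; split; [apply: SPlusEqR1 | apply: SPlusEqR2]. Qed.

Definition labels (fs : seq (label * ty)) : seq label := [seq f.1 | f <- fs].

Definition wf_fields (fs : seq (label * ty)) : Prop := {in fs, forall f, wf_ty f.2}.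

Lemma wf_fields_cat a b : wf_fields a -> wf_fields b -> wf_fields (a ++ b).
Proof. by move=> Wa Wb f; rewrite mem_cat => /orP[/Wa | /Wb]. Qed.

Lemma wf_fields_filter p a : wf_fields a -> wf_fields (filter p a).
Proof. by move=> Wa f; rewrite mem_filter => /andP[_ /Wa]. Qed.

Lemma wf_fields_cons f fs : wf_ty f.2 -> wf_fields fs -> wf_fields (f :: fs).
Proof. by move=> Wf Wfs g; rewrite inE => /predU1P[-> | /Wfs]. Qed.

Lemma wf_fields_cons_inv f fs : wf_fields (f :: fs) -> wf_ty f.2 /\ wf_fields fs.
Proof. by move=> W; split=> [|g gfs]; apply: W; rewrite inE ?eqxx ?gfs ?orbT. Qed.

Lemma wf_fields_map (K : eqType) (l : K -> label) (g : K -> ty) (I : seq K) :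
  {in I, forall i, wf_ty (g i)} -> wf_fields [seq (l i, g i) | i <- I].
Proof. by move=> W f /mapP[i iI ->]; apply: W. Qed.

Lemma wf_rec_of fs : wf_fields fs -> wf_rec (rec_of fs).
Proof.
elim: fs => [|f [|g fs] IH] W; first exact: WrEmpty.
- by case/wf_fields_cons_inv: W => Wf _; apply: WrField.
- by case/wf_fields_cons_inv: W => Wf /IH Wr; apply: WrInt => //; apply: WrField.
Qed.

#[local] Hint Resolve wf_rec_of wf_fields_cat wf_fields_filter wf_fields_cons : wf.

Lemma rec_of_field fs f : wf_fields fs -> f \in fs -> sub (rec_of fs) (TField f.1 f.2).
Proof.
elim: fs => [|g fs IH] // W; rewrite inE => /predU1P[-> | ffs].
  by case: fs {IH W} => [|h fs]; [exact: SRefl | exact: SIntL].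
case: fs IH W ffs => [|h fs] // IH /wf_fields_cons_inv[_ W] ffs.
by apply: (STrans (t := rec_of (h :: fs))); [auto with wf | exact: SIntR | exact: IH].
Qed.

Lemma rec_of_field_sub fs m s t :
  wf_fields fs -> (m, s) \in fs -> sub s t -> sub (rec_of fs) (TField m t).
Proof.
move=> W mfs st; apply: (STrans (t := TField m s)); last exact: SField.
  by have := W _ mfs; auto with wf.
exact: (rec_of_field W mfs).
Qed.

Lemma rec_of_field_meet fs m s t : wf_fields fs -> (m, s) \in fs -> (m, t) \in fs ->
  sub (rec_of fs) (TField m (TInt s t)).
Proof.
move=> W ms mt; apply: (STrans (t := TInt (TField m s) (TField m t))); last exact: SFieldInt.
  by have := W _ ms; have := W _ mt; auto with wf.
by apply: SGlb; [exact: rec_of_field W ms | exact: rec_of_field W mt].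
Qed.

Lemma rec_of_empty fs : wf_fields fs -> sub (rec_of fs) TEmpty.
Proof.
case: fs => [|f fs] W; first exact: SRefl.
apply: (STrans (t := TField f.1 f.2)); last exact: SFieldEmpty.
  by have := W f (mem_head _ _); auto with wf.
exact: rec_of_field W (mem_head _ _).
Qed.

Lemma sub_rec_of s fs :
  sub s TEmpty -> {in fs, forall f, sub s (TField f.1 f.2)} -> sub s (rec_of fs).
Proof.
elim: fs => [|f [|g fs] IH] // s0 sfs; first exact: sfs (mem_head _ _).
apply: SGlb; first exact: sfs (mem_head _ _).
by apply: IH => // h hfs; apply: sfs; rewrite inE hfs orbT.
Qed.

Lemma rec_of_subset a b : wf_fields a -> {subset b <= a} -> sub (rec_of a) (rec_of b).
Proof.
move=> W ba; apply: sub_rec_of; first exact: rec_of_empty.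
by move=> f /ba; apply: rec_of_field.
Qed.

Lemma rec_of_eq_mem a b : wf_fields a -> a =i b -> tyeq (rec_of a) (rec_of b).
Proof.
move=> Wa ab; have Wb : wf_fields b by move=> f; rewrite -ab; apply: Wa.
by split; apply: rec_of_subset => // f; rewrite ab.
Qed.

Lemma rec_of_cat a b :
  wf_fields a -> wf_fields b -> tyeq (TInt (rec_of a) (rec_of b)) (rec_of (a ++ b)).
Proof.
move=> Wa Wb; split; last first.
  have Wab : wf_fields (a ++ b) by auto with wf.
  by apply: SGlb; apply: rec_of_subset => // f fc; rewrite mem_cat fc ?orbT.
apply: sub_rec_of.
  by apply: (STrans (t := rec_of a)); [auto with wf | exact: SIntL | exact: rec_of_empty].
move=> f; rewrite mem_cat => /orP[fa | fb].
  by apply: (STrans (t := rec_of a)); [auto with wf | exact: SIntL | exact: rec_of_field].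
by apply: (STrans (t := rec_of b)); [auto with wf | exact: SIntR | exact: rec_of_field].
Qed.

Lemma rec_of_cons f fs : wf_ty f.2 -> wf_fields fs ->
  tyeq (rec_of (f :: fs)) (TInt (TField f.1 f.2) (rec_of fs)).
Proof.
move=> Wf Wfs; have W1 : wf_fields [:: f] by apply: wf_fields_cons.
by have [? ?] := rec_of_cat W1 Wfs; split.
Qed.

Definition override (a b : seq (label * ty)) : seq (label * ty) :=
  [seq f <- a | f.1 \notin labels b] ++ b.

Lemma wf_fields_override a b : wf_fields a -> wf_fields b -> wf_fields (override a b).
Proof. by move=> Wa Wb; apply: wf_fields_cat => //; apply: wf_fields_filter. Qed.

#[local] Hint Resolve wf_fields_override : wf.

Lemma uniq_labels_override a b :
  uniq (labels a) -> uniq (labels b) -> uniq (labels (override a b)).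
Proof.
move=> ua ub; rewrite /labels map_cat -(filter_map _ (fun m => m \notin labels b)) cat_uniq.
rewrite filter_uniq // ub andbT; apply/hasPn => m mb.
by rewrite mem_filter mb.
Qed.

Lemma plus_field_rec_of l s fs : wf_ty s -> wf_fields fs ->
  tyeq (TPlus (TField l s) (rec_of fs)) (rec_of (override [:: (l, s)] fs)).
Proof.
move=> Ws; have Wls : wf_fields [:: (l, s)] by apply: wf_fields_cons.
elim: fs => [|[m t] fs IH] W.
  by split; [apply: SPlusEmptyR1 | apply: SPlusEmptyR2]; auto with wf.
have [Wt Wfs] := wf_fields_cons_inv W.
tyeq_via (TPlus (TField l s) (TInt (TField m t) (rec_of fs))).
  by apply: tyeq_plusr; [auto with wf.. | apply: rec_of_cons].
have [<- | ml] := eqVneq m l.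
  have -> : override [:: (m, s)] ((m, t) :: fs) = (m, t) :: fs by rewrite /override /= inE eqxx.
  tyeq_via (TInt (TField m t) (rec_of fs)).
    by split; [apply: SPlusSame1 | apply: SPlusSame2]; auto with wf.
  exact/tyeq_sym/rec_of_cons.
tyeq_via (TInt (TField m t) (TPlus (TField l s) (rec_of fs))).
  have lm : l <> m by move=> lm; rewrite lm eqxx in ml.
  by split; [apply: SPlusDiff1 | apply: SPlusDiff2]; auto with wf.
tyeq_via (rec_of ((m, t) :: override [:: (l, s)] fs)).
  tyeq_via (TInt (TField m t) (rec_of (override [:: (l, s)] fs))).
    by apply: tyeq_int; [auto with wf.. | apply: tyeq_refl | apply: IH].
  by apply/tyeq_sym/rec_of_cons; auto with wf.
apply: rec_of_eq_mem; first by auto with wf.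
by move=> f; rewrite /override /= !inE [l == m]eq_sym (negbTE ml) /= !mem_cat inE orbCA.
Qed.

Lemma plus_rec_of a b : wf_fields a -> wf_fields b ->
  tyeq (TPlus (rec_of a) (rec_of b)) (rec_of (override a b)).
Proof.
move=> + Wb; elim: a => [|[m t] a IH] Wa.
  by split; [apply: SPlusEmptyL1 | apply: SPlusEmptyL2]; auto with wf.
have [Wt Wa'] := wf_fields_cons_inv Wa.
have Wmt : wf_fields [:: (m, t)] by apply: wf_fields_cons.
tyeq_via (TPlus (TInt (TField m t) (rec_of a)) (rec_of b)).
  by apply: tyeq_plusl; [auto with wf.. | apply: rec_of_cons].
tyeq_via (TInt (TPlus (TField m t) (rec_of b)) (TPlus (rec_of a) (rec_of b))).
  by split; [apply: SPlusDist1 | apply: SPlusDist2]; auto with wf.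
tyeq_via (rec_of (override [:: (m, t)] b ++ override a b)).
  tyeq_via (TInt (rec_of (override [:: (m, t)] b)) (rec_of (override a b))).
    by apply: tyeq_int; [auto with wf.. | apply: plus_field_rec_of | apply: IH].
  by apply: rec_of_cat; auto with wf.
apply: rec_of_eq_mem; first by auto with wf.
move=> f; rewrite /override -[(m, t) :: a]cat1s filter_cat !mem_cat.
by case: (f \in filter _ [:: _]); case: (f \in b); case: (f \in filter _ a).
Qed.

Definition omeet (o1 o2 : option ty) : option ty :=
  match o1, o2 with
  | Some s, Some t => Some (TInt s t)
  | Some s, None => Some s
  | None, o => o
  end.

Fixpoint lookup (m : label) (s : ty) : option ty :=
  match s with
  | TField l s => if l == m then Some s else None
  | TInt s t => omeet (lookup m s) (lookup m t)
  | TPlus r1 r2 => if lookup m r2 is Some t then Some t else lookup m r1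
  | _ => None
  end.

Definition opt_sub (o1 o2 : option ty) : Prop :=
  if o2 is Some t then exists2 s, o1 = Some s & sub s t else True.

Lemma opt_sub_refl o : opt_sub o o.
Proof. by case: o => [s|] //; exists s; last exact: SRefl. Qed.

Lemma lookup_wf m s t : wf_ty s -> lookup m s = Some t -> wf_ty t.
Proof.
elim: s t => //= [s IHs r IHr | l s _ | r1 IH1 r2 IH2] t.
- case/wf_ty_int=> Ws Wr.
  case E1: (lookup m s) => [a|]; case E2: (lookup m r) => [b|] //= [<-];
    by [apply: WfInt; [exact: IHs E1 | exact: IHr E2] | exact: IHs E1 | exact: IHr E2].
- by move/wf_ty_field; case: (l == m) => // W [<-].
- case/wf_ty_plus=> W1 W2; case E2: (lookup m r2) => [b|]; last exact: IH1.
  by move=> [<-]; exact: IH2 E2.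
Qed.

Ltac case_lookups m :=
  repeat match goal with
  | |- context [lookup m ?x] => case: (lookup m x) => [?|]
  | |- context [?l == m] => case: eqP => ?
  end.

Ltac close_opt_sub :=
  first [ done | exact: opt_sub_refl
        | eexists; first reflexivity; by eauto using SRefl, SIntL, SIntR, SGlb
        | congruence ].

Lemma sub_lookup m s t : sub s t -> opt_sub (lookup m s) (lookup m t).
Proof.
elim=> {s t} /=; try solve [move=> *; case_lookups m; close_opt_sub].
- move=> s t u Wt _ IHst _; case Eu: (lookup m u) => [c|] //= [b Eb bc].
  move: IHst; rewrite Eb => -[a Ea ab].
  by exists a => //; apply: (STrans (lookup_wf Wt Eb)) ab bc.
- move=> s t1 t2 _ + _; case: (lookup m t1) => [b1|]; case: (lookup m t2) => [b2|] //=.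
  by move=> [a -> H1] [_ [<-] H2]; exists a => //; apply: SGlb.
- move=> r1 r2 r _ _ _ _ IH; case: (lookup m r) => [?|]; [exact: opt_sub_refl | exact: IH].
all: move=> r r1 r2 _ _ _ _ + _.
all: case: (lookup m r1) => [a|]; case: (lookup m r2) => [b|] //= => H1 H2.
all: by [exact: opt_sub_refl | case: H1 | case: H2].
Qed.

Lemma lookup_rec_of_cons m f fs :
  lookup m (rec_of (f :: fs)) = omeet (lookup m (TField f.1 f.2)) (lookup m (rec_of fs)).
Proof. by case: fs => //=; case: (f.1 == m). Qed.

Lemma lookup_rec_of_notin m fs : m \notin labels fs -> lookup m (rec_of fs) = None.
Proof.
elim: fs => // f fs IH; rewrite inE negb_or => /andP[mf /IH].
by rewrite lookup_rec_of_cons /= eq_sym (negbTE mf) => ->.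
Qed.

Lemma lookup_rec_of m s fs : uniq (labels fs) -> (m, s) \in fs -> lookup m (rec_of fs) = Some s.
Proof.
elim: fs => // -[m' s'] fs IH /andP[m'fs ufs]; rewrite inE lookup_rec_of_cons /=.
case/predU1P => [[-> ->] | mfs]; first by rewrite eqxx lookup_rec_of_notin.
rewrite (IH ufs mfs); case: eqP => // mm'.
by rewrite mm' (map_f fst mfs) in m'fs.
Qed.

(* The default [TOmega] is never read: only labels of [fs] are looked up. *)
Lemma map_lookup_rec_of fs :
  uniq (labels fs) -> [seq (m, odflt TOmega (lookup m (rec_of fs))) | m <- labels fs] = fs.
Proof.
move=> u; rewrite -map_comp -[RHS]map_id; apply/eq_in_map => -[m s] mfs /=.
by rewrite (lookup_rec_of u mfs).
Qed.

Lemma wf_lookup_rec_of fs : uniq (labels fs) -> wf_fields fs ->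
  {in labels fs, forall m, wf_ty (odflt TOmega (lookup m (rec_of fs)))}.
Proof.
move=> u W m mfs; apply: (W (m, _)).
by rewrite -[in X in _ \in X](map_lookup_rec_of u); apply: (map_f (fun m => (m, _))).
Qed.

Section IndexedRecords.

Variables (K : eqType) (l : K -> label) (sigma tau : K -> ty) (I J : seq K).
Hypotheses (l_inj : injective l) (uniq_I : uniq I) (uniq_J : uniq J).
Hypotheses (wf_sigma : {in I, forall i, wf_ty (sigma i)}).
Hypotheses (wf_tau : {in J, forall j, wf_ty (tau j)}).

Let fields_I := [seq (l i, sigma i) | i <- I].
Let fields_J := [seq (l j, tau j) | j <- J].
Let fields_meet := [seq (l i, sigma i) | i <- I & i \notin J]
                   ++ [seq (l j, tau j) | j <- J & j \notin I]
                   ++ [seq (l k, TInt (sigma k) (tau k)) | k <- I & k \in J].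

Lemma labels_fields (g : K -> ty) (S : seq K) : labels [seq (l i, g i) | i <- S] = map l S.
Proof. by rewrite /labels -map_comp. Qed.

Lemma sub_records_iff : sub (rec_of fields_I) (rec_of fields_J) <->
  {subset J <= I} /\ {in J, forall j, sub (sigma j) (tau j)}.
Proof.
have WI : wf_fields fields_I := wf_fields_map wf_sigma.
split=> [IJ | [JI st]]; last first.
  apply: sub_rec_of => [|_ /mapP[j jJ ->]]; first exact: rec_of_empty.
  by apply: rec_of_field_sub (st j jJ) => //; apply: (map_f (fun i => (l i, sigma i))); apply: JI.
suff field_j j : j \in J -> j \in I /\ sub (sigma j) (tau j) by split=> j /field_j[].
move=> jJ; have := sub_lookup (l j) IJ.
have uJ : uniq (labels fields_J) by rewrite labels_fields map_inj_uniq.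
rewrite (lookup_rec_of uJ (map_f (fun j => (l j, tau j)) jJ)) => -[s].
have [jI | jI] := boolP (j \in I); last by rewrite lookup_rec_of_notin // labels_fields mem_map.
have uI : uniq (labels fields_I) by rewrite labels_fields map_inj_uniq.
by rewrite (lookup_rec_of uI (map_f (fun i => (l i, sigma i)) jI)) => -[<-].
Qed.

Lemma wf_fields_meet : wf_fields fields_meet.
Proof.
by do 2?apply: wf_fields_cat; apply: wf_fields_map => i; rewrite mem_filter => /andP[? ?];
  auto with wf.
Qed.

Lemma uniq_labels_meet : uniq (labels fields_meet).
Proof.
rewrite /labels !map_cat -!map_comp -!map_cat map_inj_uniq // !cat_uniq !filter_uniq //=.
rewrite andbT; apply/andP; split; apply/hasPn => i; rewrite ?mem_cat !mem_filter.
  all: by case: (i \in I); case: (i \in J).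
Qed.

Lemma mem_fields_meet k : [/\ k \in I -> k \notin J -> (l k, sigma k) \in fields_meet,
  k \in J -> k \notin I -> (l k, tau k) \in fields_meet &
  k \in I -> k \in J -> (l k, TInt (sigma k) (tau k)) \in fields_meet].
Proof.
split=> kX kY; rewrite !mem_cat; apply/or3P.
- by apply: Or31; apply: (map_f (fun i => (l i, sigma i))); rewrite mem_filter kX kY.
- by apply: Or32; apply: (map_f (fun j => (l j, tau j))); rewrite mem_filter kX kY.
- by apply: Or33; apply: (map_f (fun k => (l k, TInt (sigma k) (tau k)))); rewrite mem_filter kX kY.
Qed.

Lemma meet_records : tyeq (TInt (rec_of fields_I) (rec_of fields_J)) (rec_of fields_meet).
Proof.
have WI : wf_fields fields_I := wf_fields_map wf_sigma.
have WJ : wf_fields fields_J := wf_fields_map wf_tau.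
have WIJ : wf_fields (fields_I ++ fields_J) by auto with wf.
have mem_I i : i \in I -> (l i, sigma i) \in fields_I ++ fields_J.
  by move=> iI; rewrite mem_cat (map_f (fun i => (l i, sigma i))).
have mem_J j : j \in J -> (l j, tau j) \in fields_I ++ fields_J.
  by move=> jJ; rewrite mem_cat (map_f (fun j => (l j, tau j))) ?orbT.
tyeq_via (rec_of (fields_I ++ fields_J)).
  exact: rec_of_cat.
split; apply: sub_rec_of; [exact: rec_of_empty WIJ | | exact: rec_of_empty wf_fields_meet |].
  move=> f; rewrite !mem_cat => /or3P[] /mapP[i]; rewrite mem_filter => /andP[iJ iI] ->.
  - exact: rec_of_field WIJ (mem_I i iI).
  - exact: rec_of_field WIJ (mem_J i iI).
  - exact: rec_of_field_meet WIJ (mem_I i iI) (mem_J i iJ).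
have W := wf_fields_meet.
move=> f; rewrite mem_cat => /orP[] /mapP[i iX ->] /=; have [mI mJ mIJ] := mem_fields_meet i.
  have [iJ | iJ] := boolP (i \in J); last exact: rec_of_field W (mI iX iJ).
  exact: rec_of_field_sub W (mIJ iX iJ) (SIntL _ _).
have [iI | iI] := boolP (i \in I); last exact: rec_of_field W (mJ iX iI).
exact: rec_of_field_sub W (mIJ iI iX) (SIntR _ _).
Qed.

Lemma plus_records :
  tyeq (TPlus (rec_of fields_I) (rec_of fields_J))
       (rec_of ([seq (l i, sigma i) | i <- I & i \notin J] ++ fields_J)).
Proof.
have -> : [seq (l i, sigma i) | i <- I & i \notin J] ++ fields_J = override fields_I fields_J.
  rewrite /override filter_map labels_fields; congr (map _ _ ++ _).
  by apply: eq_filter => i /=; rewrite mem_map.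
exact: plus_rec_of (wf_fields_map wf_sigma) (wf_fields_map wf_tau).
Qed.

End IndexedRecords.

Lemma record_normal_form rho : wf_rec rho ->
  exists fs, [/\ uniq (labels fs), wf_fields fs & tyeq rho (rec_of fs)].
Proof.
elim=> {rho} [|m s Ws|r1 r2 W1 [fs1 [u1 Wfs1 e1]] W2 [fs2 [u2 Wfs2 e2]]|
              r1 r2 W1 [fs1 [u1 Wfs1 e1]] W2 [fs2 [u2 Wfs2 e2]]].
- by exists [::]; split=> //; apply: tyeq_refl.
- by exists [:: (m, s)]; split; [| apply: wf_fields_cons | apply: tyeq_refl].
- exists (override fs1 fs2); split; [exact: uniq_labels_override | auto with wf |].
  tyeq_via (TPlus (rec_of fs1) r2).
    by apply: tyeq_plusl; auto with wf.
  tyeq_via (TPlus (rec_of fs1) (rec_of fs2)).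
    by apply: tyeq_plusr; auto with wf.
  exact: plus_rec_of.
- pose sigma m := odflt TOmega (lookup m (rec_of fs1)).
  pose tau m := odflt TOmega (lookup m (rec_of fs2)).
  have W_sigma := wf_lookup_rec_of u1 Wfs1; have W_tau := wf_lookup_rec_of u2 Wfs2.
  have meet := meet_records id W_sigma W_tau.
  rewrite !map_lookup_rec_of // in meet.
  eexists; split; first exact: (@uniq_labels_meet _ id sigma tau _ _ (@inj_id _) u1 u2).
    exact: (@wf_fields_meet _ id sigma tau _ _ W_sigma W_tau).
  tyeq_via (TInt (rec_of fs1) (rec_of fs2)).
    by apply: tyeq_int; auto with wf.
  exact: meet.
Qed.

Theorem lemma3p7 :
  (forall (K : eqType) (l : K -> label) (sigma tau : K -> ty) (I J : seq K),
     injective l -> uniq I -> uniq J ->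
     {in I, forall i, wf_ty (sigma i)} -> {in J, forall j, wf_ty (tau j)} ->
     let RI := rec_of [seq (l i, sigma i) | i <- I] in
     let RJ := rec_of [seq (l j, tau j) | j <- J] in
     (* (1) *)
     (sub RI RJ <-> ({subset J <= I} /\ {in J, forall j, sub (sigma j) (tau j)}))
     (* (2) *)
     /\ tyeq (TInt RI RJ)
          (rec_of ([seq (l i, sigma i) | i <- I & i \notin J]
                   ++ [seq (l j, tau j) | j <- J & j \notin I]
                   ++ [seq (l k, TInt (sigma k) (tau k)) | k <- I & k \in J]))
     (* (3) *)
     /\ tyeq (TPlus RI RJ)
          (rec_of ([seq (l i, sigma i) | i <- I & i \notin J]
                   ++ [seq (l j, tau j) | j <- J])))
  /\
  (* (4) *)
  (forall rho : ty, wf_rec rho ->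
     exists fs : seq (label * ty),
       uniq [seq f.1 | f <- fs] /\ (forall n, n < size fs -> wf_ty (nth (0, TOmega) fs n).2)
       /\ tyeq rho (rec_of fs)).
Proof.
split=> [K l sigma tau I J l_inj uI uJ W_sigma W_tau RI RJ | rho /record_normal_form[fs [u W e]]].
  split; [exact: sub_records_iff | split; [exact: meet_records | exact: plus_records]].
by exists fs; split=> //; split=> // n n_lt; apply/W/mem_nth.
Qed.
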